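(* Let $\mathfrak{C}$ be a class of groups closed under taking subgroups and finite direct products. If the groups $G$ and $H$ are locally $\mathfrak{C}$ up to powers, then $G\times H$ is locally $\mathfrak{C}$ up to powers.
   Context: A group $\Gamma$ is locally $\mathfrak{C}$ up to powers if for every finite list $\gamma_1,\dots,\gamma_k\in\Gamma$ there are exponents $t_1,\dots,t_k\in\mathbb{N}$ such that $\langle\gamma_1^{t_1},\dots,\gamma_k^{t_k}\rangle$ belongs to $\mathfrak{C}$. *)

From Stdlib Require Import ProofIrrelevance.

Record grp : Type := Grp {
  carrier :> Type;
  gmul : carrier -> carrier -> carrier;
  gone : carrier;
  ginv : carrier -> carrier;
  gmulA : forall x y z, gmul x (gmul y z) = gmul (gmul x y) z;
  gmul1l : forall x, gmul gone x = x;
  gmul1r : forall x, gmul x gone = x;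
  gmulVl : forall x, gmul (ginv x) x = gone;
  gmulVr : forall x, gmul x (ginv x) = gone
}.

Arguments gmul {g} _ _.
Arguments gone {g}.
Arguments ginv {g} _.

Fixpoint gpow (G : grp) (x : G) (n : nat) : G :=
  match n with
  | O => gone
  | S m => gmul x (gpow G x m)
  end.

Definition is_subgroup (G : grp) (S : G -> Prop) : Prop :=
  S gone /\ (forall x y, S x -> S y -> S (gmul x y)) /\ (forall x, S x -> S (ginv x)).

Section Sub.
Variables (G : grp) (S : G -> Prop) (HS : is_subgroup G S).

Definition sub_mul (x y : {x : G | S x}) : {x : G | S x} :=
  exist _ (gmul (proj1_sig x) (proj1_sig y))
    (proj1 (proj2 HS) _ _ (proj2_sig x) (proj2_sig y)).
Definition sub_one : {x : G | S x} := exist _ gone (proj1 HS).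
Definition sub_inv (x : {x : G | S x}) : {x : G | S x} :=
  exist _ (ginv (proj1_sig x)) (proj2 (proj2 HS) _ (proj2_sig x)).

Lemma sub_eq (x y : {x : G | S x}) : proj1_sig x = proj1_sig y -> x = y.
Proof. destruct x, y; simpl; intros ->; f_equal; apply proof_irrelevance. Qed.

Definition subgrp : grp.
Proof.
  refine (@Grp {x : G | S x} sub_mul sub_one sub_inv _ _ _ _ _);
  intros; apply sub_eq; simpl.
  - apply gmulA. - apply gmul1l. - apply gmul1r. - apply gmulVl. - apply gmulVr.
Defined.
End Sub.

Definition gen (G : grp) (A : G -> Prop) : G -> Prop :=
  fun x => forall P : G -> Prop, is_subgroup G P -> (forall y, A y -> P y) -> P x.

Lemma gen_subgroup (G : grp) (A : G -> Prop) : is_subgroup G (gen G A).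
Proof.
  split; [|split].
  - intros P HP _; apply HP.
  - intros x y Hx Hy P HP HA; apply HP; [apply Hx|apply Hy]; assumption.
  - intros x Hx P HP HA; apply HP; apply Hx; assumption.
Qed.

Definition gen_grp (G : grp) (A : G -> Prop) : grp := subgrp G (gen G A) (gen_subgroup G A).

Definition prodgrp (G H : grp) : grp.
Proof.
  refine (@Grp (G * H)%type
    (fun x y => (gmul (fst x) (fst y), gmul (snd x) (snd y)))
    (gone, gone) (fun x => (ginv (fst x), ginv (snd x))) _ _ _ _ _);
  intros; simpl;
  [rewrite !gmulA | rewrite !gmul1l | rewrite !gmul1r | rewrite !gmulVl | rewrite !gmulVr];
  try reflexivity; destruct x; reflexivity.
Defined.

Definition isomorphic (G H : grp) : Prop :=
  exists (f : G -> H) (g : H -> G),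
    (forall x, g (f x) = x) /\ (forall y, f (g y) = y) /\
    (forall x y, f (gmul x y) = gmul (f x) (f y)).

Definition iso_closed (C : grp -> Prop) : Prop :=
  forall G H, isomorphic G H -> C G -> C H.
Definition subgroup_closed (C : grp -> Prop) : Prop :=
  forall (G : grp) (S : G -> Prop) (HS : is_subgroup G S), C G -> C (subgrp G S HS).
(* finite direct products: the empty product (trivial group) and binary products;
   by induction this gives all finite direct products *)
Definition trivgrp : grp.
Proof.
  refine (@Grp unit (fun _ _ => tt) tt (fun _ => tt) _ _ _ _ _);
  intros; repeat match goal with u : unit |- _ => destruct u end; reflexivity.
Defined.
Definition fin_prod_closed (C : grp -> Prop) : Prop :=
  C trivgrp /\ forall G H, C G -> C H -> C (prodgrp G H).

(* G is locally C up to powers: for every finite list g_0..g_{k-1} there are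
   exponents t_i in N = {1,2,...} with <g_0^{t_0},...,g_{k-1}^{t_{k-1}}> in C *)
Definition locally_up_to_powers (C : grp -> Prop) (G : grp) : Prop :=
  forall (k : nat) (g : nat -> G),
    exists t : nat -> nat,
      (forall i, i < k -> 0 < t i) /\
      C (gen_grp G (fun x => exists i, i < k /\ x = gpow G (g i) (t i))).

(* If a_i^{t_i} generate a group in C inside G and b_i^{s_i} one in H, then
   the elements (a_i, b_i)^{t_i s_i} generate a subgroup of the product of these
   two groups, which lies in C because C is closed under finite direct products,
   subgroups and isomorphism. *)

From Stdlib Require Import PeanoNat.

Lemma gpow_add (G : grp) (x : G) (m n : nat) :
  gpow G x (m + n) = gmul (gpow G x m) (gpow G x n).
Proof. induction m as [|m IHm]; simpl; [now rewrite gmul1l | now rewrite IHm, gmulA]. Qed.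

Lemma gpow_mul (G : grp) (x : G) (m n : nat) :
  gpow G x (n * m) = gpow G (gpow G x m) n.
Proof. induction n as [|n IHn]; simpl; [reflexivity | now rewrite gpow_add, IHn]. Qed.

Lemma gpow_prodgrp (G H : grp) (x : prodgrp G H) (n : nat) :
  gpow (prodgrp G H) x n = (gpow G (fst x) n, gpow H (snd x) n).
Proof. induction n as [|n IHn]; simpl; [reflexivity | now rewrite IHn]. Qed.

Lemma subgroup_gpow (G : grp) (S : G -> Prop) (x : G) (n : nat) :
  is_subgroup G S -> S x -> S (gpow G x n).
Proof. intros [S1 [SM _]] Sx; induction n as [|n IHn]; simpl; auto. Qed.

Lemma gen_in (G : grp) (A : G -> Prop) (x : G) : A x -> gen G A x.
Proof. intros Ax P _ AP; auto. Qed.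

Lemma gen_min (G : grp) (A P : G -> Prop) :
  is_subgroup G P -> (forall x, A x -> P x) -> forall x, gen G A x -> P x.
Proof. intros HP AP x Hx; exact (Hx P HP AP). Qed.

Lemma prod_subgroup (G H : grp) (S : G -> Prop) (T : H -> Prop) :
  is_subgroup G S -> is_subgroup H T ->
  is_subgroup (prodgrp G H) (fun x => S (fst x) /\ T (snd x)).
Proof.
  intros [S1 [SM SV]] [T1 [TM TV]]; split; [|split]; simpl.
  - auto.
  - intros x y [Sx Tx] [Sy Ty]; auto.
  - intros x [Sx Tx]; auto.
Qed.

Section SubgroupOfSubgroup.
Variables (G : grp) (S T : G -> Prop).
Hypotheses (HS : is_subgroup G S) (HT : is_subgroup G T).
Hypothesis ST : forall x, S x -> T x.

Definition restrict_subgroup (y : subgrp G T HT) : Prop := S (proj1_sig y).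

Lemma restrict_subgroupP : is_subgroup (subgrp G T HT) restrict_subgroup.
Proof.
  destruct HS as [S1 [SM SV]]; split; [|split]; unfold restrict_subgroup; simpl.
  - exact S1.
  - intros y z Sy Sz; exact (SM _ _ Sy Sz).
  - intros y Sy; exact (SV _ Sy).
Qed.

Lemma isomorphic_subgrp_restrict :
  isomorphic (subgrp (subgrp G T HT) restrict_subgroup restrict_subgroupP)
             (subgrp G S HS).
Proof.
  exists (fun y => exist S (proj1_sig (proj1_sig y)) (proj2_sig y)).
  exists (fun x => exist restrict_subgroup
                     (exist T (proj1_sig x) (ST _ (proj2_sig x))) (proj2_sig x)).
  split; [|split].
  - intros y; do 2 apply sub_eq; reflexivity.
  - intros x; apply sub_eq; reflexivity.
  - intros y z; apply sub_eq; reflexivity.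
Qed.

End SubgroupOfSubgroup.

Lemma isomorphic_prodgrp_subgrp (G H : grp) (S : G -> Prop) (T : H -> Prop)
  (HS : is_subgroup G S) (HT : is_subgroup H T) :
  isomorphic (prodgrp (subgrp G S HS) (subgrp H T HT))
             (subgrp (prodgrp G H) _ (prod_subgroup G H S T HS HT)).
Proof.
  exists (fun p => exist (fun x => S (fst x) /\ T (snd x))
                     (proj1_sig (fst p), proj1_sig (snd p))
                     (conj (proj2_sig (fst p)) (proj2_sig (snd p)))).
  exists (fun x => (exist S (fst (proj1_sig x)) (proj1 (proj2_sig x)),
                    exist T (snd (proj1_sig x)) (proj2 (proj2_sig x)))).
  split; [|split].
  - intros [[a Sa] [b Tb]]; f_equal; now apply sub_eq.
  - intros [[a b] STab]; now apply sub_eq.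
  - intros p q; now apply sub_eq.
Qed.

Section ClassClosure.
Variable C : grp -> Prop.
Hypotheses (Hiso : iso_closed C) (Hsub : subgroup_closed C).

Lemma class_subgrp_incl (G : grp) (S T : G -> Prop)
  (HS : is_subgroup G S) (HT : is_subgroup G T) :
  (forall x, S x -> T x) -> C (subgrp G T HT) -> C (subgrp G S HS).
Proof.
  intros ST CT.
  apply (Hiso _ _ (isomorphic_subgrp_restrict G S T HS HT ST)), Hsub, CT.
Qed.

Lemma class_prod_subgrp (G H : grp) (S : G -> Prop) (T : H -> Prop)
  (HS : is_subgroup G S) (HT : is_subgroup H T) :
  fin_prod_closed C -> C (subgrp G S HS) -> C (subgrp H T HT) ->
  C (subgrp (prodgrp G H) _ (prod_subgroup G H S T HS HT)).
Proof.
  intros [_ Hprod] CS CT.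
  apply (Hiso _ _ (isomorphic_prodgrp_subgrp G H S T HS HT)), Hprod; assumption.
Qed.

End ClassClosure.

Theorem lemma3p3 (C : grp -> Prop)
  (Hiso : iso_closed C) (Hsub : subgroup_closed C) (Hprod : fin_prod_closed C)
  (G H : grp) :
  locally_up_to_powers C G -> locally_up_to_powers C H ->
  locally_up_to_powers C (prodgrp G H).
Proof.
  intros HG HH k g.
  destruct (HG k (fun i => fst (g i))) as [t [t_pos CA]].
  destruct (HH k (fun i => snd (g i))) as [s [s_pos CB]].
  exists (fun i => t i * s i); split.
  { intros i lt_ik; apply Nat.mul_pos_pos; auto. }
  refine (class_subgrp_incl C Hiso Hsub _ _ _ _ _ _
            (class_prod_subgrp C Hiso _ _ _ _ _ _ Hprod CA CB)).
  apply gen_min; [apply prod_subgroup; apply gen_subgroup |].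
  intros x [i [lt_ik ->]]; rewrite gpow_prodgrp; simpl; split.
  - rewrite Nat.mul_comm, gpow_mul.
    apply subgroup_gpow; [apply gen_subgroup | apply gen_in; now exists i].
  - rewrite gpow_mul.
    apply subgroup_gpow; [apply gen_subgroup | apply gen_in; now exists i].
Qed.
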